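(* Let $Q=\Diamond abcd$ be a convex quadrilateral with vertices $a,b,c,d$ in clockwise order, such that the diagonal $\overline{ac}$ is horizontal, $|ac|=1$, and $1$ is the diameter of $Q$. Let the smallest axis-parallel rectangle containing $Q$ have horizontal side length $1$ and vertical side length $W$ with $0<W\le 1$, with $a$ on its left side, $b$ on its top side, $c$ on its right side and $d$ on its bottom side. Let $r=\frac14\sqrt{1+4W^2}$. Assume $|ab|\ge \frac{\sqrt{1+W^2}}{2}$. If one of the edges adjacent to $\overline{ab}$ (namely $\overline{bc}$ or $\overline{ad}$) has length at least $\frac{\sqrt{1+W^2}}{2}$ and $W\ge \frac{1}{\sqrt3}$, then $r\le 1.6\, r_{opt}(Q)$.
   Context: For a compact set $X\subset\mathbb{R}^2$, $r_{opt}(X)$ denotes the minimum $r$ such that two closed disks of radius $r$ have union containing $X$. *)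

From Stdlib Require Import Reals Lra.
From Coquelicot Require Import Coquelicot.
Open Scope R_scope.

Definition point := (R * R)%type.

Definition dist2 (p q : point) : R :=
  sqrt ((fst p - fst q) ^ 2 + (snd p - snd q) ^ 2).

(* cross product of (q - p) and (s - q): orientation of the turn p -> q -> s;
   negative = clockwise turn *)
Definition orient (p q s : point) : R :=
  (fst q - fst p) * (snd s - snd q) - (snd q - snd p) * (fst s - fst q).

Definition quad (a b c d : point) (p : point) : Prop :=
  exists ta tb tc td : R,
    0 <= ta /\ 0 <= tb /\ 0 <= tc /\ 0 <= td /\ ta + tb + tc + td = 1 /\
    fst p = ta * fst a + tb * fst b + tc * fst c + td * fst d /\
    snd p = ta * snd a + tb * snd b + tc * snd c + td * snd d.

Definition disk (z : point) (r : R) (p : point) : Prop := dist2 z p <= r.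

Definition two_disk_cover (X : point -> Prop) (r : R) : Prop :=
  exists z1 z2 : point, forall p, X p -> disk z1 r p \/ disk z2 r p.

Definition r_opt (X : point -> Prop) : R := real (Glb_Rbar (two_disk_cover X)).

(* Two disks cannot separate three points at mutual distance at least
   s = sqrt (1 + W^2) / 2: two of them share a disk, so r_opt >= s / 2.
   Such a triple is a, b, c when |bc| >= s (then |ac| = 1 >= s), and a, b, d
   when |ad| >= s (then |bd| >= W >= s because W >= 1/sqrt 3).  It remains
   that sqrt (1 + 4 W^2) / 4 <= 1.6 * s / 2 for every W <= 1. *)
From Stdlib Require Import Reals Lra Rgeom.
From Coquelicot Require Import Coquelicot.
Open Scope R_scope.

Lemma sqrt_le_of_le_sq (x y : R) : 0 <= y -> x <= y ^ 2 -> sqrt x <= y.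
Proof. intros Hy Hxy; rewrite <- (sqrt_pow2 y Hy); exact (sqrt_le_1_alt _ _ Hxy). Qed.

Lemma dist2_sym (p q : point) : dist2 p q = dist2 q p.
Proof. unfold dist2; f_equal; ring. Qed.

Lemma dist2_triangle (p q z : point) : dist2 p q <= dist2 p z + dist2 z q.
Proof.
  assert (Hsq : forall x, x ^ 2 = x²) by (intro; unfold Rsqr; ring).
  unfold dist2; rewrite !Hsq; apply triangle.
Qed.

Lemma Rabs_snd_le_dist2 (p q : point) : Rabs (snd p - snd q) <= dist2 p q.
Proof.
  unfold dist2; rewrite <- sqrt_Rsqr_abs; apply sqrt_le_1_alt.
  unfold Rsqr; pose proof (pow2_ge_0 (fst p - fst q)); nra.
Qed.

Lemma disk_dist2_le (z p q : point) (r : R) :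
  disk z r p -> disk z r q -> dist2 p q <= 2 * r.
Proof.
  unfold disk; intros Hp Hq.
  pose proof (dist2_triangle p q z) as Htri; rewrite (dist2_sym p z) in Htri; lra.
Qed.

(* Pigeonhole: some two of the three points lie in the same disk. *)
Lemma two_disk_cover_three_points (X : point -> Prop) (p q x : point) (s r : R) :
  X p -> X q -> X x ->
  s <= dist2 p q -> s <= dist2 p x -> s <= dist2 q x ->
  two_disk_cover X r -> s / 2 <= r.
Proof.
  intros Hp Hq Hx Hpq Hpx Hqx [z1 [z2 Hcover]].
  destruct (Hcover p Hp) as [Dp|Dp]; destruct (Hcover q Hq) as [Dq|Dq];
    destruct (Hcover x Hx) as [Dx|Dx];
    first [ pose proof (disk_dist2_le _ _ _ _ Dp Dq); lra
          | pose proof (disk_dist2_le _ _ _ _ Dp Dx); lra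
          | pose proof (disk_dist2_le _ _ _ _ Dq Dx); lra ].
Qed.

Lemma two_disk_cover_diameter (X : point -> Prop) (p0 : point) (D : R) :
  X p0 -> (forall p q, X p -> X q -> dist2 p q <= D) -> two_disk_cover X D.
Proof. intros Hp0 Hdiam; exists p0, p0; intros p Hp; left; exact (Hdiam _ _ Hp0 Hp). Qed.

(* The feasible radius r0 makes the infimum finite. *)
Lemma r_opt_ge (X : point -> Prop) (s r0 : R) :
  two_disk_cover X r0 -> (forall r, two_disk_cover X r -> s <= r) -> s <= r_opt X.
Proof.
  intros Hr0 Hlb; unfold r_opt.
  destruct (Glb_Rbar_correct (two_disk_cover X)) as [Hlower Hgreatest].
  assert (Hs : Rbar_le s (Glb_Rbar (two_disk_cover X))).
  { apply Hgreatest; intros x Hx; exact (Hlb x Hx). }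
  assert (Hfin : Rbar_le (Glb_Rbar (two_disk_cover X)) r0) by (apply Hlower; exact Hr0).
  destruct (Glb_Rbar (two_disk_cover X)); simpl in *; tauto.
Qed.

Section Vertices.
Variables a b c d : point.

Lemma quad_a : quad a b c d a.
Proof. exists 1, 0, 0, 0; repeat split; simpl; try lra; ring. Qed.
Lemma quad_b : quad a b c d b.
Proof. exists 0, 1, 0, 0; repeat split; simpl; try lra; ring. Qed.
Lemma quad_c : quad a b c d c.
Proof. exists 0, 0, 1, 0; repeat split; simpl; try lra; ring. Qed.
Lemma quad_d : quad a b c d d.
Proof. exists 0, 0, 0, 1; repeat split; simpl; try lra; ring. Qed.

End Vertices.

Lemma half_sqrt_1_plus_sq_le_1 (W : R) : W <= 1 -> 0 <= W -> sqrt (1 + W ^ 2) / 2 <= 1.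
Proof. intros; enough (sqrt (1 + W ^ 2) <= 2) by lra; apply sqrt_le_of_le_sq; nra. Qed.

Lemma half_sqrt_1_plus_sq_le (W : R) : W >= 1 / sqrt 3 -> sqrt (1 + W ^ 2) / 2 <= W.
Proof.
  intros HW.
  assert (H3 : 0 < sqrt 3) by (apply sqrt_lt_R0; lra).
  assert (H33 : sqrt 3 * sqrt 3 = 3) by (apply sqrt_sqrt; lra).
  assert (Hinv : 1 / sqrt 3 * sqrt 3 = 1) by (field; lra).
  assert (HW3 : 1 <= W * sqrt 3) by nra.
  assert (W > 0) by nra.
  enough (sqrt (1 + W ^ 2) <= 2 * W) by lra.
  apply sqrt_le_of_le_sq; nra.
Qed.

Lemma sqrt_1_plus_4sq_le (W : R) :
  0 <= W -> W <= 1 -> sqrt (1 + 4 * W ^ 2) <= 8 / 5 * sqrt (1 + W ^ 2).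
Proof.
  intros HW0 HW1.
  assert (Hsq : sqrt (1 + W ^ 2) ^ 2 = 1 + W ^ 2) by (apply pow2_sqrt; nra).
  apply sqrt_le_of_le_sq.
  - pose proof (sqrt_pos (1 + W ^ 2)); lra.
  - rewrite Rpow_mult_distr, Hsq; nra.
Qed.

Theorem lemma5 (a b c d : point) (W : R) :
  (* convex quadrilateral, vertices in clockwise order *)
  orient a b c < 0 -> orient b c d < 0 -> orient c d a < 0 -> orient d a b < 0 ->
  (* diagonal ac horizontal, |ac| = 1 *)
  snd a = snd c -> dist2 a c = 1 ->
  (* the diameter of Q is 1 *)
  (forall p q, quad a b c d p -> quad a b c d q -> dist2 p q <= 1) ->
  (* smallest axis-parallel bounding rectangle: [fst a, fst c] x [snd d, snd b],
     width 1, height W; a on left, b on top, c on right, d on bottom side *)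
  (forall p, quad a b c d p ->
     fst a <= fst p /\ fst p <= fst c /\ snd d <= snd p /\ snd p <= snd b) ->
  fst c - fst a = 1 -> snd b - snd d = W ->
  0 < W -> W <= 1 ->
  dist2 a b >= sqrt (1 + W ^ 2) / 2 ->
  (dist2 b c >= sqrt (1 + W ^ 2) / 2 \/ dist2 a d >= sqrt (1 + W ^ 2) / 2) ->
  W >= 1 / sqrt 3 ->
  sqrt (1 + 4 * W ^ 2) / 4 <= (8 / 5) * r_opt (quad a b c d).
Proof.
  intros _ _ _ _ _ Hac Hdiam _ _ HbdW W0 W1 Hab Hadj HW3.
  set (s := sqrt (1 + W ^ 2) / 2).
  assert (Hs1 : s <= 1) by (apply half_sqrt_1_plus_sq_le_1; lra).
  assert (HsW : s <= W) by (apply half_sqrt_1_plus_sq_le; exact HW3).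
  assert (Hbd : W <= dist2 b d).
  { pose proof (Rabs_snd_le_dist2 b d); rewrite Rabs_right in *; lra. }
  assert (Hlow : s / 2 <= r_opt (quad a b c d)).
  { apply (r_opt_ge _ _ 1).
    - exact (two_disk_cover_diameter _ _ _ (quad_a a b c d) Hdiam).
    - intros r Hr; destruct Hadj as [Hbc | Had].
      + apply (two_disk_cover_three_points (quad a b c d) a b c s r);
          auto using quad_a, quad_b, quad_c; unfold s in *; lra.
      + apply (two_disk_cover_three_points (quad a b c d) a b d s r);
          auto using quad_a, quad_b, quad_d; unfold s in *; lra. }
  pose proof (sqrt_1_plus_4sq_le W (Rlt_le _ _ W0) W1); unfold s in Hlow; lra.
Qed.
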